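(* Let $V$ be a real inner product space with norm $\lVert x\rVert=\sqrt{\langle x,x\rangle}$, and consider $n$ agents running the MidExtremes algorithm (described in the context) under an arbitrary communication pattern $G_1,G_2,\dots$ in which every communication graph $G_t$ is non-split, starting from arbitrary initial values $y_1(0),\dots,y_n(0)\in V$. Then for every round $t\ge 1$, \[ \Delta\big(y(t)\big)\le \sqrt{\tfrac{7}{8}}\;\Delta\big(y(t-1)\big), \] and for every $\varepsilon>0$ the convergence time satisfies $T(\varepsilon)\le \left\lceil \log_{\sqrt{8/7}} \frac{\Delta}{\varepsilon}\right\rceil$, where $\Delta=\Delta\big(y(0)\big)$ (i.e., $\Delta(y(\tau))\le\varepsilon$ for every integer $\tau\ge 0$ with $\tau\ge \lceil \log_{\sqrt{8/7}} (\Delta/\varepsilon)\rceil$). Moreover, if $V=\mathbb{R}$ (with the usual inner product), then $\Delta\big(y(t)\big)\le \tfrac12\,\Delta\big(y(t-1)\big)$ for every $t\ge1$, and $T(\varepsilon)\le \left\lceil \log_{2} \frac{\Delta}{\varepsilon}\right\rceil$.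
   Context: Dynamic network model: there are $n$ agents $1,\dots,n$ communicating in rounds $t=1,2,\dots$. In round $t$, communication is given by a directed graph $G_t$ on the vertex set $\{1,\dots,n\}$ containing every self-loop $(i,i)$; the message broadcast by $i$ in round $t$ is received by $j$ iff $(i,j)\in G_t$. A directed graph is non-split if every pair of nodes $i,j$ has a common in-neighbor $k$ (i.e., $(k,i)$ and $(k,j)$ are both edges). Each agent $i$ holds a value $y_i\in V$; $y_i(0)$ is its initial value and $y_i(t)$ its value at the end of round $t$; $y(t)=(y_1(t),\dots,y_n(t))$. MidExtremes algorithm: in round $t$ each agent $i$ broadcasts $y_i(t-1)$, lets $\mathrm{Rcv}_i(t)=\{y_j(t-1): (j,i)\in G_t\}$ be the set of received values, chooses a pair $(a,b)\in \mathrm{Rcv}_i(t)^2$ maximizing $\lVert a-b\rVert$ (ties broken arbitrarily), and sets $y_i(t)=(a+b)/2$. Notation: for $x=(x_1,\dots,x_n)\in V^n$, $\Delta(x)=\max_{i,j}\lVert x_i-x_j\rVert$. The convergence time of an execution is $T(\varepsilon)=\min\{t\ge0 : \forall \tau\ge t,\ \Delta(y(\tau))\le\varepsilon\}$. *)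

From HB Require Import structures.
From mathcomp Require Import all_boot all_order all_algebra.
From mathcomp Require Import all_classical all_reals all_analysis.
Set Implicit Arguments. Unset Strict Implicit. Unset Printing Implicit Defensive.
Import Order.TTheory GRing.Theory Num.Theory.
Local Open Scope ring_scope.

Definition inner_product (R : realType) (V : lmodType R) (ip : V -> V -> R) : Prop :=
  [/\ (forall x y : V, ip x y = ip y x),
      (forall (a : R) (x y z : V), ip (a *: x + y) z = a * ip x z + ip y z),
      (forall x : V, 0 <= ip x x) &
      (forall x : V, ip x x = 0 -> x = 0)].

Definition ipnorm (R : realType) (V : lmodType R) (ip : V -> V -> R) (x : V) : R :=
  Num.sqrt (ip x x).

(* A communication graph on agents 'I_n is a relation G (G j i = edge (j,i)). *)
Definition has_self_loops (n : nat) (G : rel 'I_n) : Prop := forall i, G i i.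

Definition non_split (n : nat) (G : rel 'I_n) : Prop :=
  forall i j : 'I_n, exists k : 'I_n, G k i /\ G k j.

Definition diam (R : realType) (V : lmodType R) (nrm : V -> R) (n : nat)
  (x : 'I_n -> V) : R :=
  \big[Num.max/0]_(i < n) \big[Num.max/0]_(j < n) nrm (x i - x j).

Definition midextremes_round (R : realType) (V : lmodType R) (nrm : V -> R)
  (n : nat) (G : rel 'I_n) (yprev ynext : 'I_n -> V) : Prop :=
  forall i : 'I_n, exists j k : 'I_n,
    [/\ G j i, G k i,
        (forall j' k' : 'I_n, G j' i -> G k' i ->
           nrm (yprev j' - yprev k') <= nrm (yprev j - yprev k)) &
        ynext i = (2 : R)^-1 *: (yprev j + yprev k)].

(* An execution: round t >= 1 uses graph G t and maps y (t-1) to y t.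
   (G 0 is unused.) *)
Definition midextremes_exec (R : realType) (V : lmodType R) (nrm : V -> R)
  (n : nat) (G : nat -> rel 'I_n) (y : nat -> 'I_n -> V) : Prop :=
  forall t : nat, midextremes_round nrm (G t.+1) (y t) (y t.+1).

Definition nonsplit_pattern (n : nat) (G : nat -> rel 'I_n) : Prop :=
  forall t : nat, has_self_loops (G t.+1) /\ non_split (G t.+1).

Definition logb (R : realType) (b x : R) : R := ln x / ln b.

From HB Require Import structures.
From mathcomp Require Import all_boot all_order all_algebra.
From mathcomp Require Import all_classical all_reals all_analysis.
From mathcomp Require Import lra.
Import Order.TTheory GRing.Theory Num.Theory.
Local Open Scope ring_scope.

(* Fix two agents i, i' of some round and, by non-splitness, a common
   in-neighbour z.  Agent i moves to the midpoint of
   a farthest pair a, b among its received values; as it also received z,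
   |z - a| and |z - b| are at most |a - b|, and likewise for the pair a', b'
   of agent i'.  In an inner product space these constraints and the bound
   Delta on the four cross distances give
   |(a + b)/2 - (a' + b')/2| <= sqrt(6/7) Delta <= sqrt(7/8) Delta, and on the
   real line a case analysis gives Delta/2.  So Delta decays geometrically, and
   the convergence time is the first t with c^t Delta <= eps. *)

Section Diameter.
Context {R : realType} {V : lmodType R} (nrm : V -> R) {n : nat}.

Lemma diam_ge0 (x : 'I_n -> V) : 0 <= diam nrm x.
Proof.
rewrite /diam; elim/big_rec: _ => // i m _ m_ge0.
by rewrite le_max m_ge0 orbT.
Qed.

Lemma le_diam (x : 'I_n -> V) (i j : 'I_n) : nrm (x i - x j) <= diam nrm x.
Proof. by apply: le_trans (le_bigmax _ _ i); apply: le_bigmax. Qed.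

Lemma diam_le (x : 'I_n -> V) M :
  0 <= M -> (forall i j, nrm (x i - x j) <= M) -> diam nrm x <= M.
Proof. by move=> M_ge0 le_M; do 2![apply: bigmax_le => // ? _]. Qed.

End Diameter.

(* a, b and a', b' are the farthest pairs chosen by two agents, z is a value
   both of them received and D bounds the cross distances. *)
Definition midpoint_contraction {R : realType} {V : lmodType R} (nrm : V -> R)
    (c : R) : Prop :=
  forall (a b a' b' z : V) (D : R), 0 <= D ->
    nrm (a - a') <= D -> nrm (a - b') <= D -> nrm (b - a') <= D -> nrm (b - b') <= D ->
    nrm (z - a) <= nrm (a - b) -> nrm (z - b) <= nrm (a - b) ->
    nrm (z - a') <= nrm (a' - b') -> nrm (z - b') <= nrm (a' - b') ->
    nrm ((2 : R)^-1 *: (a + b) - (2 : R)^-1 *: (a' + b')) <= c * D.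

Lemma midextremes_round_diam_le {R : realType} {V : lmodType R} {nrm : V -> R} {c : R}
    {n} {G : rel 'I_n} {yp yn : 'I_n -> V} :
  midpoint_contraction nrm c -> 0 <= c ->
  non_split G -> midextremes_round nrm G yp yn -> diam nrm yn <= c * diam nrm yp.
Proof.
move=> contr c_ge0 nsG round; apply: diam_le => [|i i']; first by rewrite mulr_ge0 ?diam_ge0.
have [j [k [Gji Gki far_jk ->]]] := round i.
have [j' [k' [Gj'i' Gk'i' far_jk' ->]]] := round i'.
have [z [Gzi Gzi']] := nsG i i'.
apply: (contr _ _ _ _ (yp z) _ (diam_ge0 nrm yp)) => //;
  by [apply: le_diam | apply: far_jk | apply: far_jk'].
Qed.

Lemma geometric_decay {R : realDomainType} {c : R} {d : nat -> R} :
  0 <= c -> (forall t, d t.+1 <= c * d t) -> forall t, d t <= c ^+ t * d 0%N.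
Proof.
move=> c_ge0 step; elim=> [|t IHt]; first by rewrite expr0 mul1r.
by apply: le_trans (step t) _; rewrite exprS -mulrA ler_wpM2l.
Qed.

Lemma expr_mul_le_of_ceil_logb {R : realType} {c b D eps : R} {tau : nat} :
  0 <= c -> 1 < b -> c * b = 1 -> 0 < D -> 0 < eps ->
  Num.ceil (logb b (D / eps)) <= tau%:Z -> c ^+ tau * D <= eps.
Proof.
move=> c_ge0 b_gt1 cb1 D_gt0 eps_gt0.
have b_gt0 : 0 < b by lra.
rewrite ceil_le_int /logb ler_pdivrMr ?ln_gt0 // -[(tau%:~R : R)]/(tau%:R : R).
rewrite mulr_natl -lnXn // ler_ln ?posrE ?exprn_gt0 ?divr_gt0 // ler_pdivrMr //.
move=> /(ler_wpM2l (exprn_ge0 tau c_ge0)).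
by rewrite mulrA -exprMn cb1 expr1n mul1r.
Qed.

Lemma midextremes_rate {R : realType} {V : lmodType R} {nrm : V -> R} {c : R} (b : R)
    {n} {G : nat -> rel 'I_n} {y : nat -> 'I_n -> V} :
  midpoint_contraction nrm c -> 0 <= c -> 1 < b -> c * b = 1 ->
  nonsplit_pattern G -> midextremes_exec nrm G y ->
  (forall t, diam nrm (y t.+1) <= c * diam nrm (y t)) /\
  (forall eps, 0 < eps -> forall tau : nat,
     (0 < diam nrm (y 0%N) -> Num.ceil (logb b (diam nrm (y 0%N) / eps)) <= tau%:Z) ->
     diam nrm (y tau) <= eps).
Proof.
move=> contr c_ge0 b_gt1 cb1 patG exec.
have step t : diam nrm (y t.+1) <= c * diam nrm (y t).
  exact: midextremes_round_diam_le contr c_ge0 (proj2 (patG t)) (exec t).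
split=> // eps eps_gt0 tau tau_ge.
apply: le_trans (geometric_decay (d := fun t => diam nrm (y t)) c_ge0 step tau) _.
have := diam_ge0 nrm (y 0%N); rewrite le_eqVlt => /predU1P[<-|D_gt0].
  by rewrite mulr0 ltW.
exact: expr_mul_le_of_ceil_logb (tau_ge D_gt0).
Qed.

Section InnerProduct.
Context {R : realType} {V : lmodType R} {ip : V -> V -> R}.
Hypothesis ipP : inner_product ip.

Lemma ipC x y : ip x y = ip y x. Proof. by case: ipP. Qed.

Lemma ipZDl a x y z : ip (a *: x + y) z = a * ip x z + ip y z.
Proof. by case: ipP. Qed.

Lemma ip_ge0 x : 0 <= ip x x. Proof. by case: ipP. Qed.

Lemma ipDl x y z : ip (x + y) z = ip x z + ip y z.
Proof. by rewrite -[x]scale1r ipZDl mul1r scale1r. Qed.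

Lemma ipZl a x z : ip (a *: x) z = a * ip x z.
Proof.
have ip0l : ip 0 z = 0 by have := ipZDl 1 0 0 z; rewrite scale1r addr0; lra.
by rewrite -[a *: x]addr0 ipZDl ip0l addr0.
Qed.

Lemma ipNl x z : ip (- x) z = - ip x z.
Proof. by rewrite -scaleN1r ipZl mulN1r. Qed.

Lemma ipDr x y z : ip z (x + y) = ip z x + ip z y.
Proof. by rewrite ipC ipDl !(ipC z). Qed.

Lemma ipZr a x z : ip z (a *: x) = a * ip z x.
Proof. by rewrite ipC ipZl ipC. Qed.

Lemma ipNr x z : ip z (- x) = - ip z x.
Proof. by rewrite ipC ipNl ipC. Qed.

Local Notation sq x := (ip x x).

(* With m, m' the two midpoints and S the sum of the four cross terms,
   4 sq(m - m') = S - sq(a - b) - sq(a' - b'), while 0 <= sq(a + b + a' + b' - 4z)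
   gives 4 sq(m - m') <= 6 (sq(a - b) + sq(a' - b')); hence 28 sq(m - m') <= 6 S. *)
Lemma sq_midpoint_sub_le {a b a' b' z : V} {D2 : R} :
  sq (a - a') <= D2 -> sq (a - b') <= D2 -> sq (b - a') <= D2 -> sq (b - b') <= D2 ->
  sq (z - a) <= sq (a - b) -> sq (z - b) <= sq (a - b) ->
  sq (z - a') <= sq (a' - b') -> sq (z - b') <= sq (a' - b') ->
  sq ((2 : R)^-1 *: (a + b) - (2 : R)^-1 *: (a' + b')) <= 6 / 7 * D2.
Proof.
have := ip_ge0 (a + b + a' + b' - z - z - z - z).
rewrite !(ipDl, ipDr, ipNl, ipNr, ipZl, ipZr).
rewrite (ipC b a) (ipC a' a) (ipC b' a) (ipC z a) (ipC a' b) (ipC b' b) (ipC z b)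
  (ipC b' a') (ipC z a') (ipC z b').
move=> *; nra.
Qed.

Lemma ipnorm_midpoint_contraction : midpoint_contraction (ipnorm ip) (Num.sqrt (7 / 8)).
Proof.
move=> a b a' b' z D D_ge0; rewrite /ipnorm.
have -> : D = Num.sqrt (D ^+ 2) by rewrite sqrtr_sqr ger0_norm.
rewrite -sqrtrM; last lra.
rewrite !ler_sqrt ?ip_ge0 ?mulr_ge0 ?sqr_ge0 //; try lra.
move=> aa' ab' ba' bb' za zb za' zb'.
apply: le_trans (sq_midpoint_sub_le aa' ab' ba' bb' za zb za' zb') _.
have := sqr_ge0 D; lra.
Qed.

End InnerProduct.

Lemma ipnorm_mulr {R : realType} : ipnorm (fun a b : R^o => a * b) = (fun x : R^o => `|x|).
Proof. by apply: funext => x; rewrite /ipnorm -expr2 sqrtr_sqr. Qed.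

Lemma normr_midpoint_contraction {R : realType} :
  midpoint_contraction (fun x : R^o => `|x|) 2^-1.
Proof.
move=> a b a' b' z D _.
rewrite -[_ *: (a + b)]/(2^-1 * (a + b)) -[_ *: (a' + b')]/(2^-1 * (a' + b')).
have [ab_ge0|ab_lt0] := lerP 0 (a - b);
  rewrite ?(ger0_norm ab_ge0) ?(ltr0_norm ab_lt0);
have [ab'_ge0|ab'_lt0] := lerP 0 (a' - b');
  rewrite ?(ger0_norm ab'_ge0) ?(ltr0_norm ab'_lt0);
rewrite !ler_norml => /andP[? ?] /andP[? ?] /andP[? ?] /andP[? ?]
  /andP[? ?] /andP[? ?] /andP[? ?] /andP[? ?]; apply/andP; split; lra.
Qed.

Theorem theorem1 :
  (forall (R : realType) (V : lmodType R) (ip : V -> V -> R),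
     inner_product ip ->
     forall (n : nat) (G : nat -> rel 'I_n) (y : nat -> 'I_n -> V),
       nonsplit_pattern G ->
       midextremes_exec (ipnorm ip) G y ->
       (forall t : nat,
          diam (ipnorm ip) (y t.+1) <= Num.sqrt (7 / 8 : R) * diam (ipnorm ip) (y t))
       /\
       (forall eps : R, 0 < eps ->
          forall tau : nat,
            (0 < diam (ipnorm ip) (y 0%N) ->
               Num.ceil (logb (Num.sqrt (8 / 7 : R)) (diam (ipnorm ip) (y 0%N) / eps))
                 <= tau%:Z) ->
            diam (ipnorm ip) (y tau) <= eps))
  /\
  (forall (R : realType) (n : nat) (G : nat -> rel 'I_n) (y : nat -> 'I_n -> R^o),
     nonsplit_pattern G ->
     midextremes_exec (ipnorm (fun a b : R^o => a * b)) G y ->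
     (forall t : nat,
        diam (ipnorm (fun a b : R^o => a * b)) (y t.+1)
          <= 2^-1 * diam (ipnorm (fun a b : R^o => a * b)) (y t))
     /\
     (forall eps : R, 0 < eps ->
        forall tau : nat,
          (0 < diam (ipnorm (fun a b : R^o => a * b)) (y 0%N) ->
             Num.ceil (logb 2 (diam (ipnorm (fun a b : R^o => a * b)) (y 0%N) / eps))
               <= tau%:Z) ->
          diam (ipnorm (fun a b : R^o => a * b)) (y tau) <= eps)).
Proof.
split=> [R V ip ipP n G y|R n G y]; last first.
  by rewrite ipnorm_mulr; apply: (midextremes_rate 2 normr_midpoint_contraction); lra.
apply: (midextremes_rate (Num.sqrt (8 / 7)) (ipnorm_midpoint_contraction ipP)).
- exact: sqrtr_ge0.
- by rewrite -{1}sqrtr1 ltr_sqrt; lra.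
- rewrite -sqrtrM; last lra.
  have -> : 7 / 8 * (8 / 7) = 1 :> R by lra.
  exact: sqrtr1.
Qed.
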